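(* For every component $H$ of $G[\overline{C}]$, we have $|N_H(x_1)|=|N_H(x_2)|=1$.
   Context: All graphs are simple. $\mathcal{G}^*$ denotes the class of graphs in which any two distinct odd cycles share at most one edge. Standing setting: $G\in\mathcal{G}^*$ is $2$-connected, and $C$ is a longest odd cycle of $G$ with $|C|\ge 5$. We also write $C$ for its vertex set. Let $\overline{C}=V(G)\setminus C$, assumed nonempty. For $v\in\overline{C}$ and $w\in C$, $v$ touches $w$ if there is a $v,w$-path meeting $C$ only at $w$. $T(v)=\{w\in C: v \text{ touches } w\}$. In this setting, $T(v)$ is the same set for all $v\in\overline{C}$; this set is $\{x_1,x_2\}$ for two adjacent vertices $x_1,x_2$ of $C$. For $u\in V(G)$, write $N_H(u)=N(u)\cap V(H)$. *)

(* Simple graphs: symmetric irreflexive relation e on a finType T. *)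
From mathcomp Require Import all_boot.
Set Implicit Arguments. Unset Strict Implicit. Unset Printing Implicit Defensive.

Section Graphs.
Variable T : finType.
Variable e : rel T.

Definition is_cycle (c : seq T) : bool :=
  [&& 3 <= size c, uniq c & cycle e c].

Definition odd_cycle (c : seq T) : bool := is_cycle c && odd (size c).

Definition cycle_edges (c : seq T) : {set {set T}} :=
  [set [set x; next c x] | x in c].

(* Class G^*: two distinct odd cycles share at most one edge.
   Cycles (as subgraphs) are distinct iff their edge sets differ. *)
Definition in_Gstar : Prop :=
  forall c1 c2, odd_cycle c1 -> odd_cycle c2 ->
    cycle_edges c1 != cycle_edges c2 ->
    #|cycle_edges c1 :&: cycle_edges c2| <= 1.

Definition induced (A : {set T}) : rel T :=
  fun x y => [&& e x y, x \in A & y \in A].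

Definition connected_in (A : {set T}) : Prop :=
  forall x y, x \in A -> y \in A -> connect (induced A) x y.

Definition two_connected : Prop :=
  3 <= #|T| /\ connected_in setT /\ forall v, connected_in (setT :\ v).

Definition longest_odd_cycle (c : seq T) : Prop :=
  odd_cycle c /\ forall c', odd_cycle c' -> size c' <= size c.

Definition touches (C : {set T}) (v w : T) : Prop :=
  exists p : seq T, [/\ path e v p, last v p = w, uniq (v :: p)
                      & all (fun x => x \notin C) (belast v p)].

Definition component_outside (C H : {set T}) : Prop :=
  exists2 x, x \notin C &
    H = [set y | (y \notin C) && connect (induced (~: C)) x y].

Definition nbhd_in (H : {set T}) (u : T) : {set T} := [set y in H | e u y].

End Graphs.

From mathcomp Require Import all_boot zify.
Set Implicit Arguments. Unset Strict Implicit. Unset Printing Implicit Defensive.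

(* Since G - x2 is connected and H attaches to C only at x1 and x2, x1 has a
   neighbour in H, and likewise x2 has one, say w.  If x1 had two neighbours
   u <> u' in H, a u-u' path in H together with a path from w to it would give
   two x1-x2 paths through H, both ending with the edge w x2, with different
   vertex sets.  Each has an odd number of inner vertices, for otherwise it
   closes with the long arc of C to an odd cycle longer than C; so each closes
   with the edge x1 x2 to an odd cycle.  These two distinct odd cycles share
   the edges x1 x2 and w x2, which G* forbids. *)

Section SeqCycle.
Variable T : eqType.
Implicit Types (s p q : seq T) (x y z : T).

Lemma rot_to_next s x : uniq s -> x \in s -> 1 < size s ->
  exists i s', rot i s = x :: next s x :: s'.
Proof.
move=> Us xs; case: (rot_to xs) => i [|y s'] Es; first by rewrite -(size_rot i s) Es.
by exists i, s'; rewrite -(next_rot i Us) Es /= eqxx.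
Qed.

Lemma next_neq s x : uniq s -> x \in s -> 1 < size s -> next s x != x.
Proof.
move=> Us xs /(rot_to_next Us xs)[i [s' Es]].
by move: Us; rewrite -(rot_uniq i) Es /= inE eq_sym => /andP[/norP[]].
Qed.

Lemma next_rcons_last x p y : uniq (x :: rcons p y) -> next (x :: rcons p y) y = x.
Proof.
rewrite [uniq _]/= rcons_uniq mem_rcons inE negb_or => /and3P[/andP[xy _] yp _].
rewrite next_nth inE mem_rcons inE eqxx orbT /= (negbTE xy).
by rewrite nth_default // -cats1 index_cat (negbTE yp) /= eqxx size_cat addn0 addn1.
Qed.

Lemma next_cat_cons p1 p2 y z : uniq (p1 ++ y :: z :: p2) ->
  next (p1 ++ y :: z :: p2) y = z.
Proof.
rewrite cat_uniq /= => /and3P[_ /norP[yp1 _] _].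
rewrite next_nth mem_cat inE eqxx orbT.
case: p1 yp1 => [|h p1] /=; first by rewrite eqxx.
rewrite inE negb_or eq_sym => /andP[/negbTE-> yp1].
by rewrite index_cat (negbTE yp1) /= eqxx addn0 nth_cat ltnNge leqnSn subSnn.
Qed.

End SeqCycle.

Section Paths.
Variables (T : finType) (r : rel T).
Implicit Types (p q : seq T) (x y z : T).

Definition upath x p y := [&& path r x p, uniq (x :: p) & last x p == y].

Lemma connect_upath x y : connect r x y -> exists p, upath x p y.
Proof. by case/connectP=> p /shortenP[p' ? ? _] ->; exists p'; apply/and3P. Qed.

Lemma first_hit_cat (S : pred T) x p : S (last x p) ->
  exists p1 p2, [/\ p = p1 ++ p2, S (last x p1) & all (predC S) (belast x p1)].
Proof.
elim: p x => [|y p IHp] x Slast; first by exists [::], [::].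
have [Sx | nSx] := boolP (S x); first by exists [::], (y :: p).
have [p1 [p2 [-> Sl Al]]] := IHp y Slast.
by exists (y :: p1), p2; rewrite /= nSx.
Qed.

Lemma path_closed_last (S : pred T) :
  (forall x y, S x -> r x y -> S y) -> forall x p, S x -> path r x p -> S (last x p).
Proof.
move=> clS x p; elim: p x => [|y p IHp] x //= Sx /andP[rxy Pp].
exact: IHp (clS _ _ Sx rxy) Pp.
Qed.

Lemma last_rev_belast x p : last (last x p) (rev (belast x p)) = x.
Proof. by case: p => //= y p; rewrite rev_cons last_rcons. Qed.

Hypothesis r_sym : symmetric r.

Lemma rev_path_sym x p : path r (last x p) (rev (belast x p)) = path r x p.
Proof. by rewrite rev_path; apply: eq_path => y z; rewrite r_sym. Qed.

(* The tripod in a connected graph: follow a path from [w] until it first meets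
   a [u]-[u'] path at [z], then go to [u] and to [u'] along the two halves. *)
Lemma connect_two_upaths u u' w : u != u' -> connect r u u' -> connect r w u ->
  exists A B, [/\ upath u A w, upath u' B w & ~ (u :: A =i u' :: B)].
Proof.
move=> uu' /connect_upath[t /and3P[Pt Ut /eqP Lt]].
move=> /connect_upath[R0 /and3P[PR0 UR0 /eqP LR0]].
have hitR0 : last w R0 \in u :: t by rewrite LR0 mem_head.
have [R [R' [ER0 zt AR]]] := @first_hit_cat [in u :: t] w R0 hitR0.
set z := last w R in zt; set rr := rev (belast w R).
case/splitPl: zt Pt Ut Lt AR => p1 p2 Ez; rewrite cat_path last_cat Ez.
move=> /andP[Pp1 Pp2] Ut Lu' AR.
have rr_t y : y \in rr -> y \notin u :: p1 ++ p2.
  by rewrite mem_rev => /(allP AR).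
have [PR UR] : path r w R /\ uniq (w :: R).
  move: PR0 UR0; rewrite ER0 cat_path -cat_cons cat_uniq.
  by case/andP=> -> _ /andP[-> _].
have Prr : path r z rr by rewrite -rev_path_sym in PR.
have Lrr : last z rr = w by rewrite last_rev_belast.
have Urr : uniq rr by move: UR; rewrite rev_uniq lastI rcons_uniq => /andP[].
have Ep2 : u' :: rev (belast z p2) = rev (z :: p2) by rewrite (lastI z p2) rev_rcons Lu'.
move: Ut; rewrite -cat_cons cat_uniq => /and3P[Up1 /hasPn p2p1 Up2].
exists (p1 ++ rr), (rev (belast z p2) ++ rr); split.
- apply/and3P; split; last by rewrite last_cat Ez Lrr.
    by rewrite cat_path Ez Pp1 Prr.
  rewrite -cat_cons cat_uniq Up1 Urr andbT.
  by apply/hasPn=> y /rr_t; apply: contra; rewrite -cat_cons mem_cat => ->.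
- apply/and3P; split; last by rewrite last_cat -Lu' last_rev_belast Lrr.
    by rewrite cat_path -Lu' rev_path_sym last_rev_belast Pp2 Prr.
  rewrite -cat_cons Ep2 cat_uniq rev_uniq; apply/and3P; split=> //.
    by rewrite /= Up2 andbT; apply/negP=> /p2p1; rewrite -Ez mem_last.
  apply/hasPn=> y /rr_t; apply: contra; rewrite mem_rev inE.
  by case/orP=> [/eqP->|yp2]; rewrite -cat_cons mem_cat ?yp2 ?orbT // -Ez mem_last.
move=> EAB; have urr : u \notin rr by apply/negP=> /rr_t; rewrite mem_head.
case: p1 Ez Lu' Up1 p2p1 rr_t AR EAB {Pp1} => [|h p1] /= Ez Lu' Up1 p2p1 rr_t AR EAB.
  rewrite -Ez in Lu'.
  have u'rr : u' \notin rr by apply: contraL (mem_last u p2) => /rr_t; rewrite Lu'.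
  by move: (EAB u'); rewrite mem_head inE (negbTE u'rr) orbF eq_sym (negbTE uu').
have uz : u != z by apply/eqP=> Euz; case/andP: Up1; rewrite Euz -Ez mem_last.
have up2 : u \notin p2 by apply/negP=> /p2p1; rewrite mem_head.
move: (EAB u); rewrite mem_head -cat_cons Ep2 mem_cat mem_rev inE.
by rewrite (negbTE urr) (negbTE uz) (negbTE up2).
Qed.

End Paths.

Lemma cycle_edges_eq_mem (T : finType) (c1 c2 : seq T) :
  cycle_edges c1 = cycle_edges c2 -> c1 =i c2.
Proof.
have sub d1 d2 : cycle_edges d1 = cycle_edges d2 -> {subset d1 <= d2}.
  move=> E y yd1; have : [set y; next d1 y] \in cycle_edges d2.
    by rewrite -E; apply: imset_f.
  case/imsetP=> y' y'd2 Ey; have : y \in [set y'; next d2 y'] by rewrite -Ey set21.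
  by case/set2P=> ->; rewrite ?mem_next.
by move=> E y; apply/idP/idP; apply: sub.
Qed.

Section OuterPaths.
Variables (T : finType) (e : rel T).
Hypothesis e_sym : symmetric e.
Implicit Types (c q : seq T) (a b y : T).

Lemma touches_edge (C : {set T}) a b : a \notin C -> b \in C -> e a b ->
  touches e C a b.
Proof.
move=> aC bC eab; exists [:: b]; split=> //=; rewrite ?eab ?inE ?andbT ?aC //.
by apply: contraNneq aC => ->.
Qed.

Definition outer_path c a q b :=
  [&& uniq q, all [predC c] q & path e a (rcons q b)].

Lemma outer_path_rev c a q b : outer_path c a q b -> outer_path c b (rev q) a.
Proof.
case/and3P=> Uq Aq Pq; rewrite /outer_path rev_uniq all_rev Uq Aq -rev_cons.
by rewrite -(rev_path_sym e_sym) last_rcons belast_rcons in Pq.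
Qed.

Lemma mem_outer_cycle c a q b y : a \in c -> b \in c -> y \notin c ->
  (y \in a :: rcons q b) = (y \in q).
Proof.
move=> ac bc yc; rewrite inE mem_rcons inE.
by rewrite ![y == _]eq_sym (negbTE (memPn yc a ac)) (negbTE (memPn yc b bc)).
Qed.

Lemma outer_odd_cycle c a q b : a \in c -> b \in c -> a != b -> e a b ->
  outer_path c a q b -> odd (size q) ->
  [/\ odd_cycle e (a :: rcons q b), [set a; b] \in cycle_edges (a :: rcons q b)
    & [set last a q; b] \in cycle_edges (a :: rcons q b)].
Proof.
move=> ac bc ab eab /and3P[Uq Aq Pq] oq.
have U : uniq (a :: rcons q b).
  have notin_q y : y \in c -> y \notin q by move=> yc; apply/negP=> /(allP Aq)/negP.
  by rewrite /= rcons_uniq Uq mem_rcons inE negb_or ab !notin_q.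
split.
- rewrite /odd_cycle /is_cycle U /= size_rcons /= negbK oq rcons_path Pq.
  by rewrite last_rcons e_sym eab !andbT; case: (q) oq.
- rewrite setUC -[X in [set _; X]](next_rcons_last U); apply: imset_f.
  by rewrite inE mem_rcons mem_head orbT.
- have Eq : a :: rcons q b = belast a q ++ [:: last a q; b].
    by rewrite -rcons_cons lastI -!cats1 -catA.
  have U' : uniq (belast a q ++ [:: last a q, b & [::]]) by rewrite -Eq.
  rewrite -[X in [set _; X]](next_cat_cons U') -Eq; apply: imset_f.
  by rewrite Eq mem_cat mem_head orbT.
Qed.

Lemma is_cycle_next_edge c a b : is_cycle e c -> a \in c -> b \in c ->
  (b = next c a \/ a = next c b) -> e a b && (a != b).
Proof.
case/and3P=> c3 Uc Cc ac bc [->|->].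
  by rewrite (next_cycle Cc ac) eq_sym next_neq // ltnW.
by rewrite e_sym (next_cycle Cc bc) next_neq // ltnW.
Qed.

(* Closing the outer path with the long arc of [c] from [b] to [a] gives a
   cycle of length [size c + size q]; it must not be a longer odd cycle. *)
Lemma longest_outer_path_odd c a q b : longest_odd_cycle e c ->
  a \in c -> b \in c -> (b = next c a \/ a = next c b) ->
  q != [::] -> outer_path c a q b -> odd (size q).
Proof.
move=> lng ac bc adj; wlog Eb : a b q ac bc {adj} / b = next c a => [IH|].
  case: adj => [/IH|/(IH b a (rev q)) IHr]; first exact.
  move=> qn /outer_path_rev Pr; rewrite -size_rev IHr //.
  by rewrite -size_eq0 size_rev size_eq0.
case: lng => /andP[/and3P[c3 Uc Cc] oc] lng qn /and3P[Uq Aq Pq].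
have [i [s Es]] := rot_to_next Uc ac (ltnW c3); rewrite -Eb in Es.
have Earc : b :: rcons s a = rot 1 (rot i c) by rewrite Es rot1_cons.
have arc_c : {subset b :: rcons s a <= c} by move=> y; rewrite Earc !mem_rot.
apply/negPn/negP=> ev; set L := b :: rcons s a ++ q.
have sizeL : size L = size c + size q.
  by rewrite -(size_rot i c) Es /= size_cat size_rcons.
suff /lng : odd_cycle e L by rewrite sizeL; case: (q) qn => //= *; lia.
rewrite /odd_cycle /is_cycle sizeL oddD oc (negbTE ev) andbT; apply/and3P; split.
- lia.
- rewrite /L -cat_cons cat_uniq Uq andbT {1}Earc !rot_uniq Uc.
  by apply/hasPn=> y /(allP Aq); apply: contra => /arc_c.
- move: Cc; rewrite /L -(rot_cycle i) Es /= rcons_cat cat_path last_rcons Pq.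
  by case/andP=> _ ->.
Qed.

(* In G*, two odd outer paths from [a] to [b] ending at the same vertex [w]
   yield odd cycles sharing the edges [ab] and [wb], hence the same cycle. *)
Lemma Gstar_odd_outer_paths_eq_mem c a A B b : in_Gstar e ->
  a \in c -> b \in c -> a != b -> e a b ->
  outer_path c a A b -> outer_path c a B b -> odd (size A) -> odd (size B) ->
  last a A = last a B -> A =i B.
Proof.
move=> Gs ac bc ab eab PA PB oA oB LAB.
have [cA abA wbA] := outer_odd_cycle ac bc ab eab PA oA.
have [cB abB wbB] := outer_odd_cycle ac bc ab eab PB oB.
have wc : last a A \notin c.
  case/and3P: PA oA => _ /allP AA _; case: (A) AA => //= y A' AA _.
  exact: AA (mem_last y A').
have notin_c P : outer_path c a P b -> {in c, forall y, y \notin P}.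
  by case/and3P=> _ /allP AP _ y yc; apply/negP=> /AP /negP.
have [/cycle_edges_eq_mem EAB | neq] := eqVneq (cycle_edges (a :: rcons A b))
                                                (cycle_edges (a :: rcons B b)).
  move=> y; have [yc|yc] := boolP (y \in c).
    by rewrite (negbTE (notin_c _ PA _ yc)) (negbTE (notin_c _ PB _ yc)).
  by rewrite -(mem_outer_cycle A ac bc yc) -(mem_outer_cycle B ac bc yc) EAB.
have /card_le1_eqP/(_ [set a; b] [set last a A; b]) := Gs _ _ cA cB neq.
rewrite !inE abA abB wbA LAB wbB => /(_ isT isT) /setP/(_ a).
rewrite !inE eqxx (negbTE ab) orbF /= => /eqP Ea.
by rewrite LAB -Ea ac in wc.
Qed.

End OuterPaths.

Section Component.
Variables (T : finType) (e : rel T) (c : seq T) (H : {set T}).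
Hypotheses (e_sym : symmetric e) (H_comp : component_outside e [set y in c] H).

Lemma component_notin y : y \in H -> y \notin c.
Proof. by case: H_comp => x0 _ ->; rewrite !inE => /andP[]. Qed.

Lemma component_closed y z : y \in H -> z \notin c -> e y z -> z \in H.
Proof.
case: H_comp => x0 _ ->; rewrite !inE => /andP[yc x0y] zc eyz; rewrite zc.
by apply: connect_trans x0y (connect1 _); rewrite /induced !inE yc zc eyz.
Qed.

Lemma induced_sym (S : {set T}) : symmetric (induced e S).
Proof. by move=> x y; rewrite /induced e_sym; congr (_ && _); exact: andbC. Qed.

Lemma component_connected : connected_in e H.
Proof.
have H_sym := sym_connect_sym (induced_sym H).
have [x0 x0c EH] := H_comp.
suff x0_conn y : y \in H -> connect (induced e H) x0 y.
  move=> y z /x0_conn x0y /x0_conn x0z; rewrite H_sym in x0y.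
  exact: connect_trans x0y x0z.
have x0H : x0 \in H by rewrite EH inE x0c connect0.
rewrite {1}EH inE => /andP[_ /connectP[p Pp ->]]; apply/connectP; exists p => //.
elim: p x0 x0H {x0c EH} Pp => [|z p IHp] x xH //= /andP[/and3P[exz _ zc] Pp].
have zH : z \in H by apply: component_closed xH _ exz; rewrite !inE in zc.
by rewrite /induced exz xH zH IHp.
Qed.

(* A path in G - b from H to a can leave H only through an edge to a. *)
Lemma component_nbhd_gt0 a b : a \in c -> b \in c -> a != b ->
  connected_in e (setT :\ b) ->
  (forall y z, y \in H -> z \in c -> e y z -> z = a \/ z = b) ->
  0 < #|nbhd_in e H a|.
Proof.
move=> ac bc ab conn attach; rewrite lt0n; apply/negP=> /eqP/cards0_eq noN.
have [x0 x0c EH] := H_comp.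
have x0H : x0 \in H by rewrite EH inE x0c connect0.
have ba : b != x0 by apply: contraNneq x0c => <-; rewrite inE.
have /connectP[p Pp Ea] : connect (induced e (setT :\ b)) x0 a.
  by apply: conn; rewrite !inE ?andbT // eq_sym.
have H_closed v y : v \in H -> induced e (setT :\ b) v y -> y \in H.
  move=> vH /and3P[evy _]; rewrite !inE andbT.
  have [yc | /(component_closed vH)/(_ evy)//] := boolP (y \in c).
  case: (attach v y vH yc evy) => Ey; subst y; last by rewrite eqxx.
  by move=> _; move/setP/(_ v): noN; rewrite !inE vH e_sym evy.
by move: (path_closed_last H_closed x0H Pp); rewrite -Ea => /component_notin; rewrite ac.
Qed.

Lemma path_induced_sub (S : {set T}) x p : path (induced e S) x p -> {subset p <= S}.
Proof.
elim: p x => [|y p IHp] x /=; first by move=> _ z.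
case/andP=> /and3P[_ _ yS] Pp z; rewrite inE => /orP[/eqP->//|].
exact: IHp Pp z.
Qed.

Lemma component_upath_outer a b u A w : u \in H -> e a u -> e w b ->
  upath (induced e H) u A w -> outer_path e c a (u :: A) b.
Proof.
move=> uH eau ewb /and3P[PA UA /eqP LA].
rewrite /outer_path UA /= eau rcons_path LA ewb andbT component_notin //=.
rewrite (sub_path _ PA) => [|x y /and3P[]//]; rewrite andbT.
by apply/allP=> y /(path_induced_sub PA) /component_notin.
Qed.

Lemma component_nbhd_le1 a b : in_Gstar e -> longest_odd_cycle e c ->
  a \in c -> b \in c -> (b = next c a \/ a = next c b) ->
  0 < #|nbhd_in e H b| -> #|nbhd_in e H a| <= 1.
Proof.
move=> Gs lng ac bc adj /card_gt0P[w]; rewrite inE => /andP[wH ebw].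
have cyc : is_cycle e c by case: lng => /andP[].
have /andP[eab ab] := is_cycle_next_edge e_sym cyc ac bc adj.
apply/card_le1_eqP=> u u'; rewrite !inE => /andP[uH eau] /andP[u'H eau'].
apply/eqP/negPn/negP=> uu'.
have [A [B [PA PB neqAB]]] := connect_two_upaths (induced_sym H) uu'
  (component_connected u'H uH) (component_connected wH u'H).
have ewb : e w b by rewrite e_sym.
have OA := component_upath_outer u'H eau' ewb PA.
have OB := component_upath_outer uH eau ewb PB.
apply: neqAB; apply: (Gstar_odd_outer_paths_eq_mem e_sym Gs ac bc ab eab OA OB).
- by apply: (longest_outer_path_odd e_sym lng ac bc adj) OA.
- by apply: (longest_outer_path_odd e_sym lng ac bc adj) OB.
by case/and3P: PA PB => _ _ /eqP /= -> /and3P[_ _ /eqP ->].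
Qed.

Lemma component_nbhd_card1 a b : in_Gstar e ->
  (forall v, connected_in e (setT :\ v)) -> longest_odd_cycle e c ->
  a \in c -> b \in c -> (b = next c a \/ a = next c b) ->
  (forall y z, y \in H -> z \in c -> e y z -> z = a \/ z = b) ->
  #|nbhd_in e H a| = 1.
Proof.
move=> Gs conn lng ac bc adj attach.
have cyc : is_cycle e c by case: lng => /andP[].
have /andP[_ ab] := is_cycle_next_edge e_sym cyc ac bc adj.
have attach' y z : y \in H -> z \in c -> e y z -> z = b \/ z = a.
  by move=> yH zc /(attach y z yH zc) [] ->; [right | left].
apply/eqP; rewrite eqn_leq (component_nbhd_gt0 ac bc ab (conn b) attach) andbT.
apply: (component_nbhd_le1 Gs lng ac bc adj).
by apply: component_nbhd_gt0 bc ac _ (conn a) attach'; rewrite eq_sym.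
Qed.

End Component.

Theorem mainTheorem9 (T : finType) (e : rel T) (c : seq T) (x1 x2 : T) :
  symmetric e -> irreflexive e ->
  in_Gstar e -> two_connected e ->
  longest_odd_cycle e c -> 5 <= size c ->
  (exists v, v \notin c) ->
  x1 \in c -> x2 \in c -> (x2 = next c x1 \/ x1 = next c x2) ->
  (forall v, v \notin c ->
     forall w, (w \in c /\ touches e [set y in c] v w) <-> (w = x1 \/ w = x2)) ->
  forall H : {set T}, component_outside e [set y in c] H ->
    #|nbhd_in e H x1| = 1 /\ #|nbhd_in e H x2| = 1.
Proof.
move=> e_sym _ Gs [_ [_ conn]] lng _ _ x1c x2c adj touch H cH.
have attach y z : y \in H -> z \in c -> e y z -> z = x1 \/ z = x2.
  move=> yH zc eyz; have yc := component_notin cH yH.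
  by apply/(touch y yc); split=> //; apply: touches_edge; rewrite ?inE.
split; first exact: (component_nbhd_card1 e_sym cH Gs conn lng x1c x2c adj attach).
apply: (component_nbhd_card1 e_sym cH Gs conn lng x2c x1c); first by case: adj; auto.
by move=> y z yH zc /(attach y z yH zc) [] ->; [right | left].
Qed.
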